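(* For every $\epsilon\in(0,1)$ there exists a positive integer $K=K(\epsilon)$ such that for every pair $\vec f=(f,g)\in F\times F$ and every $n>0$ there is a measurable set $S\subseteq\Omega^\infty$ with $f(S)\ge1-\epsilon$ (where $f$ is the measure induced by $\vec f$) such that every $\omega\in S$ satisfies at least one of the following: (1) $\vec f$ is $\epsilon$-close along $\omega$ at all but at most $K$ periods $t\in\{1,\dots,n\}$; or (2) $\omega\in L^{\vec f}_{\mathcal D,1-\epsilon}$, and moreover $|\mathcal D_t(\omega,\vec f)-\mathcal D_n(\omega,\vec f)|<\epsilon$ for all $t\ge n$.
   Context: Let $\Omega=\{0,1\}$, $\Omega^\infty$ the set of infinite sequences $\omega=(\omega_1,\omega_2,\dots)$, and $\omega^t=(\omega_1,\dots,\omega_t)$ (also used for the cylinder set of all sequences with this prefix; $\omega^0=\emptyset$). $\mathcal G_t$ is the $\sigma$-algebra generated by the length-$t$ cylinders and $\mathcal G_\infty$ the $\sigma$-algebra generated by all cylinders. $\Delta(\Omega)$ is the set of probability distributions on $\Omega$; for $p\in\Delta(\Omega)$ and $x\in\Omega$, $p[x]$ is the probability of $x$. A forecasting strategy is a map $f:\bigcup_{t\ge0}(\Omega\times\Delta(\Omega)\times\Delta(\Omega))^t\to\Delta(\Omega)$; $F$ is the set of all forecasting strategies. Given an ordered pair $\vec f=(f,g)\in F\times F$ and $\omega\in\Omega^\infty$, the play path $(\omega,\vec f)$ is defined recursively: $(\omega,\vec f)^0=\emptyset$ and its $t$-th entry is $(\omega_t,f((\omega,\vec f)^{t-1}),g((\omega,\vec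 f)^{t-1}))$, where $(\omega,\vec f)^t$ is its prefix of length $t$. The pair $\vec f$ induces two probability measures on $(\Omega^\infty,\mathcal G_\infty)$, again denoted $f$ and $g$, determined by $f(\omega^t)=\prod_{n=1}^t f((\omega,\vec f)^{n-1})[\omega_n]$ and $g(\omega^t)=\prod_{n=1}^t g((\omega,\vec f)^{n-1})[\omega_n]$. The finite derivative test $\mathcal D$: for $t\ge0$, $\mathcal D_{t+1}(\omega,\vec f)=\frac{f(\omega^t)}{f(\omega^t)+g(\omega^t)}$ if $f(\omega^t)>0$ or $g(\omega^t)>0$, and $\frac12$ otherwise. For a test $T$, $T(\omega,\vec f)=\lim_tT_t(\omega,\vec f)$ when it exists, and $L^{\vec f}_{T,\epsilon}=\{\omega:T(\omega,\vec f)\text{ exists and }>\epsilon\}$. The pair $\vec f$ is $\epsilon$-close along $\omega$ at period $t>0$ if $|f((\omega,\vec f)^{t-1})[\omega_t]-g((\omega,\vec f)^{t-1})[\omega_t]|<\epsilon$. *)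

From Stdlib Require Import Reals Lra List.
Import ListNotations.
Open Scope R_scope.

(* Omega = {0,1} is rendered as bool (true = 1). Infinite sequences are
   functions nat -> bool, with omega_t (t >= 1) being [w (t-1)]. *)
Definition seqs := nat -> bool.

(* Delta(Omega): a distribution on {0,1}, given by its probability of 1. *)
Record dist := mkDist { pr1 : R; pr1_ge0 : 0 <= pr1; pr1_le1 : pr1 <= 1 }.

Definition prob (p : dist) (x : bool) : R := if x then pr1 p else 1 - pr1 p.

(* Histories: finite sequences (chronological order) of
   (outcome, forecast of f, forecast of g). *)
Definition history := list (bool * dist * dist).
Definition strategy := history -> dist.

Fixpoint path (f g : strategy) (w : seqs) (t : nat) : history :=
  match t with
  | O => []
  | S k => path f g w k ++ [(w k, f (path f g w k), g (path f g w k))]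
  end.

(* h is f or g; the play path is always the one of the ordered pair (f,g). *)
Fixpoint meas_of (h f g : strategy) (w : seqs) (t : nat) : R :=
  match t with
  | O => 1
  | S k => meas_of h f g w k * prob (h (path f g w k)) (w k)
  end.

Definition fcyl (f g : strategy) (w : seqs) (t : nat) : R := meas_of f f g w t.

Definition gcyl (f g : strategy) (w : seqs) (t : nat) : R := meas_of g f g w t.

(* Finite derivative test D_t, for t >= 1: D_{k+1} uses omega^k.
   (D_0 is not used by the statement; it is set equal to D_1.) *)
Definition Dtest (f g : strategy) (w : seqs) (t : nat) : R :=
  let k := Nat.pred t in
  let a := fcyl f g w k in
  let b := gcyl f g w k in
  if Rlt_dec 0 a then a / (a + b)
  else if Rlt_dec 0 b then a / (a + b) else / 2.

Definition in_L_D (f g : strategy) (eps : R) (w : seqs) : Prop :=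
  exists l, Un_cv (Dtest f g w) l /\ l > eps.

Definition eps_close (f g : strategy) (eps : R) (w : seqs) (t : nat) : Prop :=
  Rabs (prob (f (path f g w (Nat.pred t))) (w (Nat.pred t))
        - prob (g (path f g w (Nat.pred t))) (w (Nat.pred t))) < eps.

Definition eps_closeb (f g : strategy) (eps : R) (w : seqs) (t : nat) : bool :=
  if Rlt_dec (Rabs (prob (f (path f g w (Nat.pred t))) (w (Nat.pred t))
        - prob (g (path f g w (Nat.pred t))) (w (Nat.pred t)))) eps
  then true else false.

Definition n_not_close (f g : strategy) (eps : R) (w : seqs) (n : nat) : nat :=
  length (filter (fun t => negb (eps_closeb f g eps w t)) (seq 1 n)).

Definition cyl (s : list bool) (w : seqs) : Prop :=
  forall i, (i < length s)%nat -> w i = nth i s false.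

Inductive measurable : (seqs -> Prop) -> Prop :=
  | meas_cyl : forall s, measurable (cyl s)
  | meas_compl : forall A, measurable A -> measurable (fun w => ~ A w)
  | meas_union : forall A : nat -> seqs -> Prop,
      (forall n, measurable (A n)) -> measurable (fun w => exists n, A n w)
  | meas_ext : forall A B, measurable A -> (forall w, A w <-> B w) -> measurable B.

Definition cyl_meas (f g : strategy) (s : list bool) : R :=
  fcyl f g (fun i => nth i s false) (length s).

(* "f(A) >= r", where f(A) is the (Caratheodory) extension of the cylinder
   premeasure: the infimum over countable cylinder covers of A of the total
   f-mass of the cover.  For A in G_infinity this is the induced measure. *)
Definition meas_ge (f g : strategy) (A : seqs -> Prop) (r : R) : Prop :=
  forall c : nat -> list bool,
    (forall w, A w -> exists n, cyl (c n) w) ->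
    forall l, infinite_sum (fun n => cyl_meas f g (c n)) l -> r <= l.

From Stdlib Require Import Reals Lra Lia List Classical ClassicalEpsilon.
Import ListNotations.
Open Scope R_scope.

(* All probabilistic reasoning is done on finite binary words: [sum_words n F] sums F
   over the words of length n, and fmass, gmass and the mixture mmass = (f + g) / 2 are
   the cylinder masses.  Under mmass, D is a martingale, and three estimates on the
   f-mass of bad events after time n are proved:
   - many non-close periods with D_n not close to 1 is unlikely, because the Hellinger
     process sqrt(f g) * theta^-(non-close periods) is a supermartingale
     ([unclose_low_mass]);
   - D_n close to 1 followed by a drop of D is unlikely, by the maximal inequality for
     the martingale 1 - D ([drop_mass]);
   - an oscillation of D by 2^-k after a time T k at which the energy E_m[D^2] has
     settled is unlikely, by the maximal inequality for (D - D_{T k})^2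
     ([oscillation_mass]).
   The event S of the theorem is the intersection of the events [good N], determined by
   the first N outcomes, outside these bad events.  It is measurable, and a compactness
   (Koenig) argument turns the finite-level bound 1 - eps into a bound on the outer
   measure.  On S, either few periods are non-close, or D converges above 1 - eps/2 and
   stays within eps/2 of D_n. *)

Definition ind (P : Prop) : R := if excluded_middle_informative P then 1 else 0.

Lemma ind_01 P : 0 <= ind P <= 1.
Proof. unfold ind; destruct excluded_middle_informative; lra. Qed.

Lemma ind_T (P : Prop) : P -> ind P = 1.
Proof. unfold ind; destruct excluded_middle_informative; tauto. Qed.

Lemma ind_F (P : Prop) : ~ P -> ind P = 0.
Proof. unfold ind; destruct excluded_middle_informative; tauto. Qed.

Lemma ind_iff (P Q : Prop) : (P <-> Q) -> ind P = ind Q.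
Proof. intro H; unfold ind; destruct excluded_middle_informative, excluded_middle_informative; tauto. Qed.

Lemma ind_and P Q : ind (P /\ Q) = ind P * ind Q.
Proof. unfold ind; repeat destruct excluded_middle_informative; try lra; tauto. Qed.

Lemma ind_not P : ind (~ P) = 1 - ind P.
Proof. unfold ind; repeat destruct excluded_middle_informative; try lra; tauto. Qed.

Lemma ind_le_or P Q R : (P -> Q \/ R) -> ind P <= ind Q + ind R.
Proof. intro H; unfold ind; repeat destruct excluded_middle_informative; try lra;
  exfalso; tauto. Qed.

Fixpoint sumL {A} (l : list A) (F : A -> R) : R :=
  match l with [] => 0 | x :: l' => F x + sumL l' F end.

Lemma sumL_app {A} (l1 l2 : list A) F : sumL (l1 ++ l2) F = sumL l1 F + sumL l2 F.
Proof. induction l1; simpl; lra. Qed.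

Lemma sumL_flat_map {A B} (G : A -> list B) l F :
  sumL (flat_map G l) F = sumL l (fun x => sumL (G x) F).
Proof. induction l; simpl; [lra|]. rewrite sumL_app; lra. Qed.

Lemma sumL_ext_in {A} (l : list A) F G : (forall x, In x l -> F x = G x) -> sumL l F = sumL l G.
Proof. induction l; simpl; intros; [lra|]. rewrite H by auto. f_equal; apply IHl; auto. Qed.

Lemma sumL_le_in {A} (l : list A) F G : (forall x, In x l -> F x <= G x) -> sumL l F <= sumL l G.
Proof. induction l; simpl; intros; [lra|]. pose proof (H a (or_introl eq_refl)) as Ha.
  assert (sumL l F <= sumL l G) by auto. lra. Qed.

Lemma sumL_plus {A} (l : list A) F G : sumL l (fun x => F x + G x) = sumL l F + sumL l G.
Proof. induction l; simpl; lra. Qed.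

Lemma sumL_minus {A} (l : list A) F G : sumL l (fun x => F x - G x) = sumL l F - sumL l G.
Proof. induction l; simpl; lra. Qed.

Lemma sumL_scal {A} (l : list A) c F : sumL l (fun x => c * F x) = c * sumL l F.
Proof. induction l; simpl; lra. Qed.

Lemma sumL_ge0 {A} (l : list A) F : (forall x, In x l -> 0 <= F x) -> 0 <= sumL l F.
Proof. intros. apply Rle_trans with (sumL l (fun _ => 0)).
  - clear H; induction l; simpl; lra.
  - apply sumL_le_in; auto. Qed.

Fixpoint words (n : nat) : list (list bool) :=
  match n with
  | O => [[]]
  | S k => flat_map (fun s => [s ++ [false]; s ++ [true]]) (words k)
  end.

Lemma words_len n s : In s (words n) -> length s = n.
Proof.
  revert s; induction n; simpl; intros s H.
  - destruct H as [<-|[]]; auto.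
  - apply in_flat_map in H as [x [Hx Hs]]. simpl in Hs.
    destruct Hs as [<-|[<-|[]]]; rewrite length_app; simpl; rewrite IHn; auto; lia.
Qed.

Lemma words_in n s : length s = n -> In s (words n).
Proof.
  revert s; induction n; intros s H.
  - destruct s; simpl in *; [auto|lia].
  - destruct (exists_last (l := s)) as [s' [b ->]].
    { intro; subst; simpl in H; lia. }
    rewrite length_app in H; simpl in H.
    simpl. apply in_flat_map. exists s'. split. apply IHn; lia.
    destruct b; simpl; auto.
Qed.

Definition sum_words n F := sumL (words n) F.

Lemma sum_words_S n F : sum_words (S n) F = sum_words n (fun s => F (s ++ [false]) + F (s ++ [true])).
Proof. unfold sum_words; simpl. rewrite sumL_flat_map. apply sumL_ext_in; intros; simpl; lra. Qed.

Lemma sum_words_0 F : sum_words 0 F = F [].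
Proof. unfold sum_words; simpl; lra. Qed.

Lemma sum_words_ext n F G : (forall s, length s = n -> F s = G s) -> sum_words n F = sum_words n G.
Proof. intros; apply sumL_ext_in; intros; apply H, words_len; auto. Qed.

Lemma sum_words_le n F G : (forall s, length s = n -> F s <= G s) -> sum_words n F <= sum_words n G.
Proof. intros; apply sumL_le_in; intros; apply H, words_len; auto. Qed.

Lemma sum_words_ge0 n F : (forall s, length s = n -> 0 <= F s) -> 0 <= sum_words n F.
Proof. intros; apply sumL_ge0; intros; apply H, words_len; auto. Qed.

Lemma sum_words_plus n F G : sum_words n (fun x => F x + G x) = sum_words n F + sum_words n G.
Proof. apply sumL_plus. Qed.

Lemma sum_words_minus n F G : sum_words n (fun x => F x - G x) = sum_words n F - sum_words n G.
Proof. apply sumL_minus. Qed.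

Lemma sum_words_scal n c F : sum_words n (fun x => c * F x) = c * sum_words n F.
Proof. apply sumL_scal. Qed.

Lemma sum_words_split n d F : sum_words (n + d) F = sum_words n (fun s => sum_words d (fun e => F (s ++ e))).
Proof.
  revert F; induction d; intros F.
  - rewrite Nat.add_0_r. apply sum_words_ext; intros. rewrite sum_words_0, app_nil_r; auto.
  - rewrite Nat.add_succ_r, sum_words_S, IHd. apply sum_words_ext; intros.
    rewrite sum_words_S. apply sum_words_ext; intros. rewrite !app_assoc; auto.
Qed.

Lemma sum_words_cons d F :
  sum_words (S d) F = sum_words d (fun e => F (false :: e)) + sum_words d (fun e => F (true :: e)).
Proof.
  change (S d) with (1 + d)%nat. rewrite sum_words_split. unfold sum_words at 1; simpl. lra.
Qed.

Lemma sum_words_point n (p : list bool) G : length p = n ->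
  sum_words n (fun s => ind (s = p) * G s) = G p.
Proof.
  revert p G; induction n; intros p G Hp.
  - destruct p; simpl in Hp; try lia. rewrite sum_words_0, ind_T; auto; lra.
  - destruct (exists_last (l := p)) as [p' [b ->]].
    { intro; subst; simpl in Hp; lia. }
    rewrite length_app in Hp; simpl in Hp.
    rewrite sum_words_S.
    transitivity (sum_words n (fun s => ind (s = p') * G (s ++ [b]))).
    2: apply (IHn p' (fun s => G (s ++ [b]))); lia.
    apply sum_words_ext; intros s Hs.
    assert (E : forall x, (s ++ [x] = p' ++ [b]) <-> (s = p' /\ x = b)).
    { intro x; split.
      - intro H. apply app_inj_tail in H; tauto.
      - intros [-> ->]; auto. }
    rewrite (ind_iff _ _ (E false)), (ind_iff _ _ (E true)), !ind_and.
    destruct b.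
    + rewrite (ind_F (false = true)), (ind_T (true = true)) by congruence. lra.
    + rewrite (ind_T (false = false)), (ind_F (true = false)) by congruence. lra.
Qed.

Fixpoint sumN (M : nat) (F : nat -> R) : R :=
  match M with O => 0 | S k => sumN k F + F k end.

Lemma sum_words_sumN n M (F : nat -> list bool -> R) :
  sum_words n (fun s => sumN M (fun k => F k s)) = sumN M (fun k => sum_words n (F k)).
Proof. induction M; simpl. unfold sum_words; induction (words n); simpl; lra.
  rewrite sum_words_plus, IHM; auto. Qed.

Lemma sumN_le M F G : (forall k, (k < M)%nat -> F k <= G k) -> sumN M F <= sumN M G.
Proof. induction M; simpl; intros; [lra|]. assert (F M <= G M) by auto.
  assert (sumN M F <= sumN M G) by auto. lra. Qed.

(* The weights 2^-(k+1) sum to at most 1; they split an error budget over k. *)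
Lemma sumN_geom M : sumN M (fun k => (/2) ^ (S k)) <= 1.
Proof.
  assert (forall M, sumN M (fun k => (/2) ^ (S k)) = 1 - (/2)^M).
  { clear M; intro M; induction M; cbn [sumN]. simpl; lra. rewrite IHM. simpl. lra. }
  rewrite H. assert (0 <= (/2)^M) by (apply pow_le; lra). lra.
Qed.

Lemma sumN_scal M c F : sumN M (fun k => c * F k) = c * sumN M F.
Proof. induction M; simpl; [lra|]. rewrite IHM; lra. Qed.

Lemma ind_exists_le M (Q : nat -> Prop) (P : Prop) :
  (P -> exists k, (k < M)%nat /\ Q k) -> ind P <= sumN M (fun k => ind (Q k)).
Proof.
  revert P; induction M; intros P H; simpl.
  - rewrite ind_F; [lra|]. intro HP; destruct (H HP) as [k [Hk _]]; lia.
  - apply Rle_trans with (ind (exists k, (k < M)%nat /\ Q k) + ind (Q M)).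
    + apply ind_le_or. intro HP; destruct (H HP) as [k [Hk HQ]].
      destruct (Nat.eq_dec k M); [subst; auto|]. left; exists k; split; auto; lia.
    + specialize (IHM (exists k, (k < M)%nat /\ Q k) (fun h => h)). lra.
Qed.

Definition seq_of (s : list bool) : seqs := fun i => nth i s false.

Definition pre (w : seqs) (k : nat) : list bool := map w (seq 0 k).

Lemma pre_len w k : length (pre w k) = k.
Proof. unfold pre; rewrite length_map, length_seq; auto. Qed.

Lemma seq_of_pre w k i : (i < k)%nat -> seq_of (pre w k) i = w i.
Proof. intro H; unfold seq_of, pre.
  rewrite nth_indep with (d' := w 0%nat) by (rewrite length_map, length_seq; auto).
  rewrite map_nth, seq_nth; auto. Qed.

Lemma pre_ext w w' k : (forall i, (i < k)%nat -> w i = w' i) -> pre w k = pre w' k.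
Proof. intro H; unfold pre; apply map_ext_in; intros i Hi. apply in_seq in Hi. apply H; lia. Qed.

Lemma pre_seq_of_app s e : pre (seq_of (s ++ e)) (length s) = s.
Proof.
  apply nth_ext with (d := false) (d' := false). rewrite pre_len; auto.
  intros i Hi; rewrite pre_len in Hi. change (seq_of (pre (seq_of (s++e)) (length s)) i = seq_of s i).
  rewrite seq_of_pre by auto. unfold seq_of; rewrite app_nth1; auto.
Qed.

Lemma pre_seq_of s : pre (seq_of s) (length s) = s.
Proof. rewrite <- (app_nil_r s) at 1. rewrite pre_seq_of_app; auto. Qed.

Lemma seq_of_app_lt s e i : (i < length s)%nat -> seq_of (s ++ e) i = seq_of s i.
Proof. intros; unfold seq_of; rewrite app_nth1; auto. Qed.

Lemma path_dep f g w w' t : (forall i, (i < t)%nat -> w i = w' i) -> path f g w t = path f g w' t.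
Proof. induction t; intros H; simpl; auto. rewrite IHt by (intros; apply H; lia).
  rewrite (H t) by lia; auto. Qed.

Lemma meas_dep h f g w w' t : (forall i, (i < t)%nat -> w i = w' i) ->
  meas_of h f g w t = meas_of h f g w' t.
Proof. induction t; intros H; simpl; auto. rewrite IHt by (intros; apply H; lia).
  rewrite (path_dep f g w w' t) by (intros; apply H; lia). rewrite (H t) by lia; auto. Qed.

Lemma prob_ge0 p x : 0 <= prob p x.
Proof. destruct p; unfold prob; destruct x; simpl; lra. Qed.

Lemma prob_sum p : prob p false + prob p true = 1.
Proof. unfold prob; lra. Qed.

Lemma meas_ge0 h f g w t : 0 <= meas_of h f g w t.
Proof. induction t; simpl; [lra|]. apply Rmult_le_pos; auto. apply prob_ge0. Qed.

Definition path_word f g s := path f g (seq_of s) (length s).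

Definition fmass f g s := meas_of f f g (seq_of s) (length s).

Definition gmass f g s := meas_of g f g (seq_of s) (length s).

Lemma meas_word_snoc h f g s b :
  meas_of h f g (seq_of (s ++ [b])) (length (s ++ [b])) =
  meas_of h f g (seq_of s) (length s) * prob (h (path_word f g s)) b.
Proof.
  rewrite length_app; simpl; rewrite Nat.add_1_r; simpl.
  unfold path_word.
  rewrite (meas_dep h f g (seq_of (s ++ [b])) (seq_of s)) by (intros; apply seq_of_app_lt; auto).
  rewrite (path_dep f g (seq_of (s ++ [b])) (seq_of s)) by (intros; apply seq_of_app_lt; auto).
  unfold seq_of at 3. rewrite nth_middle. auto.
Qed.

Lemma fmass_snoc f g s b : fmass f g (s ++ [b]) = fmass f g s * prob (f (path_word f g s)) b.
Proof. apply meas_word_snoc. Qed.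

Lemma gmass_snoc f g s b : gmass f g (s ++ [b]) = gmass f g s * prob (g (path_word f g s)) b.
Proof. apply meas_word_snoc. Qed.

Lemma fmass_ge0 f g s : 0 <= fmass f g s.
Proof. apply meas_ge0. Qed.

Lemma gmass_ge0 f g s : 0 <= gmass f g s.
Proof. apply meas_ge0. Qed.

Lemma fmass_add f g s : fmass f g (s ++ [false]) + fmass f g (s ++ [true]) = fmass f g s.
Proof. rewrite !fmass_snoc. pose proof (prob_sum (f (path_word f g s))). nra. Qed.

Lemma gmass_add f g s : gmass f g (s ++ [false]) + gmass f g (s ++ [true]) = gmass f g s.
Proof. rewrite !gmass_snoc. pose proof (prob_sum (g (path_word f g s))). nra. Qed.

Lemma sum_words_ext_sum (mu : list bool -> R) :
  (forall x, mu (x ++ [false]) + mu (x ++ [true]) = mu x) ->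
  forall d s, sum_words d (fun e => mu (s ++ e)) = mu s.
Proof.
  intros H d; induction d; intros s.
  - rewrite sum_words_0, app_nil_r; auto.
  - rewrite sum_words_S. rewrite <- (IHd s). apply sum_words_ext; intros e _.
    rewrite !app_assoc. apply H.
Qed.

Lemma sum_words_total (mu : list bool -> R) :
  (forall x, mu (x ++ [false]) + mu (x ++ [true]) = mu x) ->
  forall d, sum_words d mu = mu [].
Proof. intros H d. rewrite <- (sum_words_ext_sum mu H d []). apply sum_words_ext; auto. Qed.

Lemma fmass_nil f g : fmass f g [] = 1.
Proof. reflexivity. Qed.

Lemma gmass_nil f g : gmass f g [] = 1.
Proof. reflexivity. Qed.

Lemma fcyl_pre f g w k : fcyl f g w k = fmass f g (pre w k).
Proof. unfold fcyl, fmass. rewrite pre_len. apply meas_dep. intros; rewrite seq_of_pre; auto. Qed.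

Lemma gcyl_pre f g w k : gcyl f g w k = gmass f g (pre w k).
Proof. unfold gcyl, gmass. rewrite pre_len. apply meas_dep. intros; rewrite seq_of_pre; auto. Qed.

Definition Dword f g s : R :=
  let a := fmass f g s in let b := gmass f g s in
  if Rlt_dec 0 a then a / (a + b) else if Rlt_dec 0 b then a / (a + b) else / 2.

Lemma Dtest_pre f g w t : Dtest f g w t = Dword f g (pre w (Nat.pred t)).
Proof. unfold Dtest, Dword. rewrite fcyl_pre, gcyl_pre. auto. Qed.

(* The mixture m = (f + g) / 2 dominates f, and D is an m-martingale since
   m * D = f / 2 and m * (1 - D) = g / 2. *)
Definition mmass f g s := (fmass f g s + gmass f g s) / 2.

Lemma mmass_add f g s : mmass f g (s ++ [false]) + mmass f g (s ++ [true]) = mmass f g s.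
Proof. unfold mmass. rewrite <- (fmass_add f g s), <- (gmass_add f g s). lra. Qed.

Lemma mmass_ge0 f g s : 0 <= mmass f g s.
Proof. unfold mmass; pose proof (fmass_ge0 f g s); pose proof (gmass_ge0 f g s); lra. Qed.

Lemma fmass_le_2mmass f g s : fmass f g s <= 2 * mmass f g s.
Proof. unfold mmass; pose proof (fmass_ge0 f g s); pose proof (gmass_ge0 f g s); lra. Qed.

Lemma Dword_range f g s : 0 <= Dword f g s <= 1.
Proof.
  unfold Dword; pose proof (fmass_ge0 f g s); pose proof (gmass_ge0 f g s).
  destruct Rlt_dec; [|destruct Rlt_dec]; try lra;
  (assert (Hp : 0 < fmass f g s + gmass f g s) by lra;
   assert (E : fmass f g s = (fmass f g s / (fmass f g s + gmass f g s)) *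
                             (fmass f g s + gmass f g s)) by (field; lra);
   set (x := fmass f g s / (fmass f g s + gmass f g s)) in *; split; nra).
Qed.

Lemma mmass_D f g s : mmass f g s * Dword f g s = fmass f g s / 2.
Proof.
  unfold Dword, mmass; pose proof (fmass_ge0 f g s); pose proof (gmass_ge0 f g s).
  destruct Rlt_dec; [|destruct Rlt_dec]; try (field; lra).
  assert (fmass f g s = 0) by lra. assert (gmass f g s = 0) by lra. rewrite H1, H2. lra.
Qed.

Lemma mmass_coD f g s : mmass f g s * (1 - Dword f g s) = gmass f g s / 2.
Proof. rewrite Rmult_minus_distr_l, mmass_D. unfold mmass. lra. Qed.

Lemma app_cons_snoc {A} (s e : list A) b : s ++ b :: e = (s ++ [b]) ++ e.
Proof. rewrite <- app_assoc; auto. Qed.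

(* Maximal inequality on the binary tree (Ville/Doob). *)
Lemma maximal_inequality (mu Y : list bool -> R) (W : list bool -> nat -> R) a :
  0 <= a ->
  (forall x, 0 <= mu x) -> (forall x, mu (x ++ [false]) + mu (x ++ [true]) = mu x) ->
  (forall x d, 0 <= W x d) ->
  (forall x d, W (x ++ [false]) d + W (x ++ [true]) d <= W x (S d)) ->
  (forall x d, a <= Y x -> a * mu x <= W x d) ->
  forall d s, a * sum_words d (fun e => mu (s ++ e) *
     ind (exists j, (length s <= j <= length s + d)%nat /\ a <= Y (pre (seq_of (s ++ e)) j)))
   <= W s d.
Proof.
  intros Ha Hmu Hadd HW0 HWS HWY d; induction d; intros s.
  - rewrite sum_words_0, app_nil_r.
    destruct (classic (a <= Y s)) as [Hy|Hy].
    + match goal with |- context [ind ?P] => pose proof (ind_01 P) end.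
      specialize (HWY s 0%nat Hy). specialize (Hmu s).
      assert (0 <= a * mu s) by nra. nra.
    + rewrite ind_F. rewrite Rmult_0_r, Rmult_0_r; auto.
      intros [j [Hj Hy']]. assert (j = length s) by lia. subst.
      rewrite pre_seq_of in Hy'. auto.
  - destruct (classic (a <= Y s)) as [Hy|Hy].
    + rewrite (sum_words_ext _ _ (fun e => mu (s ++ e))).
      * rewrite sum_words_ext_sum by auto. auto.
      * intros e _. rewrite ind_T. lra. exists (length s). split. lia.
        rewrite pre_seq_of_app; auto.
    + rewrite sum_words_cons.
      assert (Hb : forall b, sum_words d (fun e => mu (s ++ b :: e) *
        ind (exists j, (length s <= j <= length s + S d)%nat /\ a <= Y (pre (seq_of (s ++ b :: e)) j)))
        = sum_words d (fun e => mu ((s ++ [b]) ++ e) *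
        ind (exists j, (length (s ++ [b]) <= j <= length (s ++ [b]) + d)%nat /\
             a <= Y (pre (seq_of ((s ++ [b]) ++ e)) j)))).
      { intro b. apply sum_words_ext; intros e _. rewrite app_cons_snoc. f_equal. apply ind_iff.
        rewrite length_app; simpl. split.
        - intros [j [Hj Hy']]. destruct (Nat.eq_dec j (length s)).
          + subst. rewrite <- app_assoc, pre_seq_of_app in Hy'. tauto.
          + exists j; split; auto; lia.
        - intros [j [Hj Hy']]. exists j; split; auto; lia. }
      rewrite !Hb. specialize (IHd (s ++ [false])) as H1. specialize (IHd (s ++ [true])) as H2.
      specialize (HWS s d). lra.
Qed.

Lemma mmass_D_add f g s : mmass f g (s ++ [false]) * Dword f g (s ++ [false]) +
  mmass f g (s ++ [true]) * Dword f g (s ++ [true]) = mmass f g s * Dword f g s.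
Proof. rewrite !mmass_D. rewrite <- (fmass_add f g s). lra. Qed.

Lemma mmass_coD_add f g s : mmass f g (s ++ [false]) * (1 - Dword f g (s ++ [false])) +
  mmass f g (s ++ [true]) * (1 - Dword f g (s ++ [true])) = mmass f g s * (1 - Dword f g s).
Proof. rewrite !mmass_coD. rewrite <- (gmass_add f g s). lra. Qed.

(* (D - c)^2 is an m-submartingale (conditional Jensen inequality). *)
Lemma sq_dev_submartingale f g c s :
  mmass f g s * (Dword f g s - c)^2 <=
  mmass f g (s ++ [false]) * (Dword f g (s ++ [false]) - c)^2 +
  mmass f g (s ++ [true]) * (Dword f g (s ++ [true]) - c)^2.
Proof.
  pose proof (mmass_D_add f g s) as H1. pose proof (mmass_add f g s) as H2.
  pose proof (mmass_ge0 f g (s ++ [false])). pose proof (mmass_ge0 f g (s ++ [true])).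
  set (m0 := mmass f g (s ++ [false])) in *. set (m1 := mmass f g (s ++ [true])) in *.
  set (x0 := Dword f g (s ++ [false])) in *. set (x1 := Dword f g (s ++ [true])) in *.
  set (M := mmass f g s) in *. set (y := Dword f g s) in *.
  destruct (Req_dec M 0) as [HM|HM].
  - rewrite HM. assert (0 <= m0 * (x0 - c)^2) by (apply Rmult_le_pos; [lra| apply pow2_ge_0]).
    assert (0 <= m1 * (x1 - c)^2) by (apply Rmult_le_pos; [lra| apply pow2_ge_0]). lra.
  - assert (HMp : 0 < M) by lra.
    assert (Ey : M * (y - c) = m0 * x0 + m1 * x1 - (m0 + m1) * c)
      by (rewrite Rmult_minus_distr_l, H1, H2; ring).
    assert (E : M * (m0 * (x0 - c)^2 + m1 * (x1 - c)^2) - (M * (y - c))^2 = m0 * m1 * (x0 - x1)^2)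
      by (rewrite Ey, <- H2; ring).
    assert (0 <= m0 * m1 * (x0 - x1)^2) by (apply Rmult_le_pos; [nra| apply pow2_ge_0]).
    apply (Rmult_le_reg_l M); auto. nra.
Qed.

(* The m-weighted quadratic deviation of D from c over the continuations of s of
   length d; it is a supermartingale in the sense of [maximal_inequality]. *)
Definition spread f g c s d := sum_words d (fun e => mmass f g (s ++ e) * (Dword f g (s ++ e) - c)^2).

Lemma spread_S f g c s d : spread f g c s (S d) = spread f g c (s ++ [false]) d + spread f g c (s ++ [true]) d.
Proof. unfold spread. rewrite sum_words_cons.
  f_equal; apply sum_words_ext; intros; rewrite app_cons_snoc; auto. Qed.

Lemma spread_ge f g c s d : mmass f g s * (Dword f g s - c)^2 <= spread f g c s d.
Proof.
  revert s; induction d; intros s.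
  - unfold spread; rewrite sum_words_0, app_nil_r; lra.
  - rewrite spread_S. pose proof (sq_dev_submartingale f g c s). pose proof (IHd (s ++ [false])).
    pose proof (IHd (s ++ [true])). lra.
Qed.

Lemma spread_ge0 f g c s d : 0 <= spread f g c s d.
Proof. apply sum_words_ge0; intros. apply Rmult_le_pos; [apply mmass_ge0| apply pow2_ge_0]. Qed.

Lemma mmass_D_ext f g : forall d s,
  sum_words d (fun e => mmass f g (s ++ e) * Dword f g (s ++ e)) = mmass f g s * Dword f g s.
Proof. apply (sum_words_ext_sum (fun x => mmass f g x * Dword f g x)). apply mmass_D_add. Qed.

Lemma mmass_ext f g : forall d s, sum_words d (fun e => mmass f g (s ++ e)) = mmass f g s.
Proof. apply (sum_words_ext_sum (mmass f g)). apply mmass_add. Qed.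

Lemma fmass_ext f g : forall d s, sum_words d (fun e => fmass f g (s ++ e)) = fmass f g s.
Proof. apply (sum_words_ext_sum (fmass f g)). apply fmass_add. Qed.

(* With c = D(s) the spread is the growth of m-weighted D^2 after s (orthogonality
   of martingale increments). *)
Lemma spread_eq f g s d : spread f g (Dword f g s) s d =
  sum_words d (fun e => mmass f g (s ++ e) * Dword f g (s ++ e)^2) - mmass f g s * Dword f g s ^2.
Proof.
  unfold spread. set (c := Dword f g s).
  transitivity (sum_words d (fun e => mmass f g (s ++ e) * Dword f g (s ++ e)^2) -
                2 * c * sum_words d (fun e => mmass f g (s ++ e) * Dword f g (s ++ e)) +
                c^2 * sum_words d (fun e => mmass f g (s ++ e))).
  - rewrite <- !sum_words_scal, <- sum_words_minus, <- sum_words_plus. apply sum_words_ext; intros; ring.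
  - rewrite mmass_D_ext, mmass_ext. unfold c. ring.
Qed.

Definition energy f g t := sum_words t (fun s => mmass f g s * Dword f g s ^ 2).

Lemma energy_diff f g T d :
  energy f g (T + d) - energy f g T = sum_words T (fun s => spread f g (Dword f g s) s d).
Proof.
  unfold energy. rewrite sum_words_split, <- sum_words_minus.
  apply sum_words_ext; intros. rewrite spread_eq. auto.
Qed.

Lemma mmass_total f g d : sum_words d (mmass f g) = 1.
Proof. rewrite sum_words_total by apply mmass_add. unfold mmass; rewrite fmass_nil, gmass_nil; lra. Qed.

Lemma fmass_total f g d : sum_words d (fmass f g) = 1.
Proof. rewrite sum_words_total by apply fmass_add. apply fmass_nil. Qed.

Lemma energy_le1 f g t : energy f g t <= 1.
Proof. rewrite <- (mmass_total f g t). apply sum_words_le; intros.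
  pose proof (Dword_range f g s). pose proof (mmass_ge0 f g s).
  assert (Dword f g s ^ 2 <= 1) by (simpl; nra).
  assert (0 <= Dword f g s ^ 2) by apply pow2_ge_0.
  rewrite <- (Rmult_1_r (mmass f g s)) at 2. apply Rmult_le_compat_l; lra. Qed.

Lemma energy_mono f g T t : (T <= t)%nat -> energy f g T <= energy f g t.
Proof. intro H. replace t with (T + (t - T))%nat by lia.
  pose proof (energy_diff f g T (t - T)).
  assert (0 <= sum_words T (fun s => spread f g (Dword f g s) s (t - T)))
    by (apply sum_words_ge0; intros; apply spread_ge0).
  lra. Qed.

Lemma bounded_incr_tail (Q : nat -> R) B : (forall a b, (a <= b)%nat -> Q a <= Q b) ->
  (forall t, Q t <= B) ->
  forall eta, 0 < eta -> exists T, forall t, (T <= t)%nat -> Q t - Q T <= eta.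
Proof.
  intros Hm Hb eta He. apply NNPP; intro Hn.
  assert (Hk : forall k : nat, exists T, Q T >= Q 0%nat + INR k * eta).
  { induction k. { exists 0%nat. simpl; lra. }
    destruct IHk as [T HT]. assert (~ forall t, (T <= t)%nat -> Q t - Q T <= eta) by eauto.
    apply not_all_ex_not in H as [t Ht]. exists t.
    destruct (Compare_dec.le_dec T t). 2: { exfalso; apply Ht; intro; contradiction. }
    assert (Q t - Q T > eta). { apply Rnot_le_gt; intro; apply Ht; auto. }
    rewrite S_INR. lra. }
  destruct (INR_unbounded ((B - Q 0%nat) / eta)) as [k Hk'].
  destruct (Hk k) as [T HT]. specialize (Hb T).
  assert (INR k * eta > B - Q 0%nat).
  { apply (Rmult_gt_compat_r eta) in Hk'; auto.
    replace ((B - Q 0%nat) / eta * eta) with (B - Q 0%nat) in Hk' by (field; lra). lra. }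
  lra.
Qed.

Lemma n_not_close_S f g eps w k : n_not_close f g eps w (S k) =
  (n_not_close f g eps w k + (if eps_closeb f g eps w (S k) then 0 else 1))%nat.
Proof.
  unfold n_not_close. rewrite seq_S, filter_app, length_app. simpl.
  replace (1 + k)%nat with (S k) by lia. destruct (eps_closeb f g eps w (S k)); simpl; lia.
Qed.

Lemma absdiff_prob p q x : Rabs (prob p x - prob q x) = Rabs (pr1 p - pr1 q).
Proof. unfold prob; destruct x; auto. replace (1 - pr1 p - (1 - pr1 q)) with (- (pr1 p - pr1 q)) by ring.
  apply Rabs_Ropp. Qed.

Lemma eps_closeb_eq f g eps w k : eps_closeb f g eps w (S k) =
  if Rlt_dec (Rabs (pr1 (f (path f g w k)) - pr1 (g (path f g w k)))) eps then true else false.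
Proof. unfold eps_closeb. simpl. rewrite absdiff_prob. auto. Qed.

Lemma n_not_close_dep f g eps w w' k : (forall i, (i < k)%nat -> w i = w' i) ->
  n_not_close f g eps w k = n_not_close f g eps w' k.
Proof.
  induction k; intros H; [reflexivity|]. rewrite !n_not_close_S, !eps_closeb_eq.
  rewrite IHk by (intros; apply H; lia). rewrite (path_dep f g w w' k) by (intros; apply H; lia). auto.
Qed.

Definition unclose_step f g eps s : nat :=
  if Rlt_dec (Rabs (pr1 (f (path_word f g s)) - pr1 (g (path_word f g s)))) eps then 0%nat else 1%nat.

Lemma n_not_close_snoc f g eps s b : n_not_close f g eps (seq_of (s ++ [b])) (length (s ++ [b])) =
  (n_not_close f g eps (seq_of s) (length s) + unclose_step f g eps s)%nat.
Proof.
  rewrite length_app; simpl. rewrite Nat.add_1_r, n_not_close_S, eps_closeb_eq.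
  rewrite (n_not_close_dep f g eps (seq_of (s ++ [b])) (seq_of s)) by (intros; apply seq_of_app_lt; auto).
  rewrite (path_dep f g (seq_of (s ++ [b])) (seq_of s)) by (intros; apply seq_of_app_lt; auto).
  unfold unclose_step, path_word. destruct Rlt_dec; auto.
Qed.

Lemma bhattacharyya_bound p q : 0 <= p <= 1 -> 0 <= q <= 1 ->
  sqrt (p * q) + sqrt ((1 - p) * (1 - q)) <= 1 - (p - q)^2 / 8.
Proof.
  intros Hp Hq.
  rewrite !sqrt_mult by lra.
  pose proof (sqrt_sqrt p) as E1. pose proof (sqrt_sqrt q) as E2.
  pose proof (sqrt_sqrt (1-p)) as E3. pose proof (sqrt_sqrt (1-q)) as E4.
  pose proof (sqrt_pos p). pose proof (sqrt_pos q). pose proof (sqrt_pos (1-p)). pose proof (sqrt_pos (1-q)).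
  set (u := sqrt p) in *. set (v := sqrt q) in *. set (u' := sqrt (1-p)) in *. set (v' := sqrt (1-q)) in *.
  assert (Hu : u * u = p) by (apply E1; lra). assert (Hv : v * v = q) by (apply E2; lra).
  assert (Hu' : u' * u' = 1 - p) by (apply E3; lra). assert (Hv' : v' * v' = 1 - q) by (apply E4; lra).
  assert (u <= 1) by nra. assert (v <= 1) by nra.
  assert (Hpq : (p - q)^2 = (u - v)^2 * (u + v)^2) by (rewrite <- Hu, <- Hv; ring).
  assert ((u + v)^2 <= 4) by nra.
  assert (0 <= (u - v)^2) by apply pow2_ge_0.
  assert ((p - q)^2 <= 4 * (u - v)^2) by (rewrite Hpq; nra).
  assert (1 - (u * v + u' * v') = ((u - v)^2 + (u' - v')^2) / 2) by nra.
  assert (0 <= (u' - v')^2) by apply pow2_ge_0.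
  lra.
Qed.

(* At a non-close period the Bhattacharyya coefficient is at most theta eps. *)
Definition theta eps := 1 - eps^2 / 8.

Lemma theta_range eps : 0 < eps < 1 -> 0 < theta eps < 1.
Proof. intro He. unfold theta; nra. Qed.

Definition bhattacharyya p q : R :=
  sqrt (prob p false * prob q false) + sqrt (prob p true * prob q true).

(* One period shrinks the Bhattacharyya coefficient by at least theta eps when the
   forecasts are not eps-close, which compensates the factor theta^-1 of the count. *)
Lemma bhattacharyya_step eps p q : 0 < eps < 1 ->
  (/ theta eps) ^ (if Rlt_dec (Rabs (pr1 p - pr1 q)) eps then 0 else 1) * bhattacharyya p q <= 1.
Proof.
  intro He. pose proof (theta_range eps He) as Ht.
  assert (Hp : 0 <= pr1 p <= 1) by (destruct p; simpl; lra).
  assert (Hq : 0 <= pr1 q <= 1) by (destruct q; simpl; lra).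
  assert (Hs : bhattacharyya p q <= 1 - (pr1 q - pr1 p)^2/8).
  { pose proof (bhattacharyya_bound (pr1 q) (pr1 p) Hq Hp).
    unfold bhattacharyya, prob. rewrite (Rmult_comm (1 - pr1 p)), (Rmult_comm (pr1 p)). lra. }
  destruct Rlt_dec as [Hl|Hl]; rewrite ?pow_O, ?pow_1.
  - assert (0 <= (pr1 q - pr1 p)^2) by apply pow2_ge_0. lra.
  - assert (eps^2 <= (pr1 q - pr1 p)^2).
    { replace ((pr1 q - pr1 p)^2) with (Rabs (pr1 p - pr1 q) ^2).
      - apply pow_incr; lra.
      - rewrite <- Rabs_Ropp, pow2_abs. f_equal; ring. }
    assert (bhattacharyya p q <= theta eps) by (unfold theta; lra).
    apply (Rmult_le_reg_l (theta eps)); [lra|].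
    rewrite <- Rmult_assoc, Rinv_r by lra. lra.
Qed.

(* The Hellinger process sqrt(f g) * theta^-(number of non-close periods).
   It is a supermartingale for the counting measure on words, so its total over words
   of any length is at most 1. *)
Definition hellinger f g eps s :=
  sqrt (fmass f g s * gmass f g s) * (/ theta eps) ^ (n_not_close f g eps (seq_of s) (length s)).

Lemma hellinger_ge0 f g eps s : 0 < eps < 1 -> 0 <= hellinger f g eps s.
Proof.
  intro He. pose proof (theta_range eps He). unfold hellinger.
  apply Rmult_le_pos; [apply sqrt_pos|]. apply pow_le. left; apply Rinv_0_lt_compat; lra.
Qed.

Lemma hellinger_step f g eps s : 0 < eps < 1 ->
  hellinger f g eps (s ++ [false]) + hellinger f g eps (s ++ [true]) <= hellinger f g eps s.
Proof.
  intro He. pose proof (hellinger_ge0 f g eps s He) as HA.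
  unfold hellinger in *. rewrite !n_not_close_snoc, !fmass_snoc, !gmass_snoc.
  set (F := fmass f g s) in *. set (G := gmass f g s) in *.
  set (p := f (path_word f g s)). set (q := g (path_word f g s)).
  assert (E : forall b, sqrt (F * prob p b * (G * prob q b)) =
                        sqrt (F * G) * sqrt (prob p b * prob q b)).
  { intro b. rewrite <- sqrt_mult.
    - f_equal; ring.
    - apply Rmult_le_pos; [apply fmass_ge0|apply gmass_ge0].
    - apply Rmult_le_pos; apply prob_ge0. }
  rewrite !E, !pow_add.
  pose proof (bhattacharyya_step eps p q He) as Hb.
  unfold unclose_step. fold p q. unfold bhattacharyya in Hb.
  set (A := sqrt (F * G) * (/ theta eps) ^ n_not_close f g eps (seq_of s) (length s)) in *.
  match type of Hb with ?X <= 1 => apply Rle_trans with (A * X) end.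
  - right. unfold A. ring.
  - apply Rle_trans with (A * 1); [apply Rmult_le_compat_l; auto | lra].
Qed.

Lemma hellinger_total f g eps L : 0 < eps < 1 -> sum_words L (hellinger f g eps) <= 1.
Proof.
  intro He. induction L.
  - rewrite sum_words_0. unfold hellinger. rewrite fmass_nil, gmass_nil, sqrt_square by lra.
    change (n_not_close f g eps (seq_of []) (length (@nil bool))) with 0%nat. simpl. lra.
  - rewrite sum_words_S. apply Rle_trans with (sum_words L (hellinger f g eps)); auto.
    apply sum_words_le; intros; apply hellinger_step; auto.
Qed.

(* With at least K non-close periods and 1 - D > rho^2 we have g > rho^2 f, so
   f <= sqrt(f g) / rho <= hellinger * theta^K / rho. *)
Lemma unclose_low_pointwise f g eps K rho s : 0 < eps < 1 -> 0 < rho ->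
  fmass f g s * ind ((K <= n_not_close f g eps (seq_of s) (length s))%nat /\ rho^2 < 1 - Dword f g s)
  <= hellinger f g eps s * theta eps ^ K / rho.
Proof.
  intros He Hr.
  assert (Ht : 0 < theta eps < 1) by (apply theta_range; auto).
  assert (0 <= hellinger f g eps s * theta eps ^ K / rho).
  { apply Rmult_le_pos; [apply Rmult_le_pos; [apply hellinger_ge0; auto| apply pow_le; lra]|
      left; apply Rinv_0_lt_compat; auto]. }
  destruct (classic ((K <= n_not_close f g eps (seq_of s) (length s))%nat /\ rho^2 < 1 - Dword f g s))
    as [[HK HX]|HN].
  2: { rewrite ind_F by auto. lra. }
  rewrite ind_T by auto. rewrite Rmult_1_r.
  pose proof (mmass_coD f g s) as HmX. pose proof (fmass_ge0 f g s). pose proof (gmass_ge0 f g s).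
  destruct (Req_dec (fmass f g s) 0) as [HF|HF]. { rewrite HF; lra. }
  assert (Hm : 0 < mmass f g s) by (unfold mmass; lra).
  assert (HGF : fmass f g s * rho^2 <= gmass f g s).
  { assert (mmass f g s * rho^2 < mmass f g s * (1 - Dword f g s)) by (apply Rmult_lt_compat_l; auto).
    unfold mmass in *. assert (0 <= gmass f g s * rho^2) by (apply Rmult_le_pos; [lra|apply pow2_ge_0]).
    lra. }
  assert (Hsq : fmass f g s * rho <= sqrt (fmass f g s * gmass f g s)).
  { rewrite <- (sqrt_square (fmass f g s * rho)) by (apply Rmult_le_pos; lra).
    apply sqrt_le_1_alt. simpl in HGF. nra. }
  unfold hellinger.
  assert (HN1 : 1 <= (/ theta eps) ^ (n_not_close f g eps (seq_of s) (length s)) * theta eps ^ K).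
  { revert HK. generalize (n_not_close f g eps (seq_of s) (length s)). intros N HK.
    replace N with (K + (N - K))%nat by lia. rewrite pow_add.
    replace ((/ theta eps) ^ K * (/ theta eps) ^ (N - K) * theta eps ^ K) with
      ((/ theta eps) ^ (N - K) * ((/ theta eps) ^ K * theta eps ^ K)) by ring.
    rewrite <- Rpow_mult_distr, Rinv_l, pow1 by lra. rewrite Rmult_1_r.
    apply pow_R1_Rle. rewrite <- Rinv_1. apply Rinv_le_contravar; lra. }
  assert (0 <= sqrt (fmass f g s * gmass f g s)) by apply sqrt_pos.
  apply (Rmult_le_reg_r rho); auto. unfold Rdiv. rewrite Rmult_assoc, Rinv_l, Rmult_1_r by lra.
  nra.
Qed.

Definition is_prefix (p s : list bool) := exists e, s = p ++ e.

Lemma sumN_sum_f M G : sumN (S M) G = sum_f_R0 G M.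
Proof. induction M; simpl; [lra|]. simpl in IHM. rewrite <- IHM. auto. Qed.

Lemma partial_le_inf (u : nat -> R) l : (forall n, 0 <= u n) -> infinite_sum u l ->
  forall N, sum_f_R0 u N <= l.
Proof.
  intros Hu Hl N. apply Rnot_lt_le; intro H.
  destruct (Hl (sum_f_R0 u N - l)) as [M HM]; [lra|].
  specialize (HM (max M N) (Nat.le_max_l _ _)).
  assert (sum_f_R0 u N <= sum_f_R0 u (max M N)).
  { assert (forall k, sum_f_R0 u N <= sum_f_R0 u (N + k)).
    { induction k. rewrite Nat.add_0_r; lra. rewrite Nat.add_succ_r. simpl. specialize (Hu (S (N + k))). lra. }
    replace (max M N) with (N + (max M N - N))%nat by lia. auto. }
  unfold R_dist in HM. apply Rabs_def2 in HM. lra.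
Qed.

Lemma cyl_meas_fm f g p : cyl_meas f g p = fmass f g p.
Proof. reflexivity. Qed.

Lemma is_prefix_same_len (s0 p e : list bool) : length s0 = length p ->
  (is_prefix p (s0 ++ e) <-> s0 = p).
Proof.
  intro H; split.
  - intros [e' He']. apply app_eq_app in He' as [l [[H1 _]|[H1 _]]]; subst;
    rewrite length_app in H; destruct l; simpl in *; try lia; rewrite app_nil_r; auto.
  - intros ->. exists e; auto.
Qed.

Lemma mass_prefix f g N p : (length p <= N)%nat ->
  sum_words N (fun s => fmass f g s * ind (is_prefix p s)) = fmass f g p.
Proof.
  intro H. replace N with (length p + (N - length p))%nat by lia. rewrite sum_words_split.
  transitivity (sum_words (length p) (fun s0 => ind (s0 = p) * fmass f g s0)).
  - apply sum_words_ext; intros s0 Hs0.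
    rewrite (sum_words_ext _ _ (fun e => ind (s0 = p) * fmass f g (s0 ++ e))).
    + rewrite sum_words_scal, fmass_ext; auto.
    + intros e _. rewrite (ind_iff _ _ (is_prefix_same_len s0 p e Hs0)). ring.
  - apply sum_words_point; auto.
Qed.

Lemma cyl_pre p w : cyl p w -> p = pre w (length p).
Proof.
  intro H. apply nth_ext with (d := false) (d' := false). rewrite pre_len; auto.
  intros i Hi. change (seq_of p i = seq_of (pre w (length p)) i). rewrite seq_of_pre by auto.
  symmetry; apply H; auto.
Qed.

Lemma pre_S w k : pre w (S k) = pre w k ++ [w k].
Proof. unfold pre. rewrite seq_S, map_app. auto. Qed.

Lemma family_antitone (Good : nat -> seqs -> Prop) :
  (forall N w, Good (S N) w -> Good N w) -> forall N N' w, (N <= N')%nat -> Good N' w -> Good N w.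
Proof. intros H N N' w HN. induction HN; auto. Qed.

Lemma koenig_branch (P : list bool -> Prop) :
  P [] -> (forall t, P t -> P (t ++ [false]) \/ P (t ++ [true])) ->
  exists w : seqs, forall k, P (pre w k).
Proof.
  intros Pnil Pext.
  set (branch := fix branch k := match k with O => [] | S k =>
    if excluded_middle_informative (P (branch k ++ [false]))
    then branch k ++ [false] else branch k ++ [true] end).
  assert (Hbr : forall k, P (branch k) /\ length (branch k) = k).
  { induction k as [|k [IP IL]]. { split; auto. }
    simpl. destruct excluded_middle_informative as [Hf|Hf];
      split; auto; try (rewrite length_app, IL; simpl; lia).
    destruct (Pext _ IP); tauto. }
  assert (HbrS : forall k, exists b, branch (S k) = branch k ++ [b]).
  { intro k. simpl. destruct excluded_middle_informative; eauto. }
  exists (fun i => nth i (branch (S i)) false).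
  enough (Hw : forall k, pre (fun i => nth i (branch (S i)) false) k = branch k).
  { intro k. rewrite Hw. apply Hbr. }
  induction k. { reflexivity. }
  rewrite pre_S, IHk. destruct (HbrS k) as [b Hb].
  rewrite Hb. f_equal. f_equal.
  pattern k at 1; rewrite <- (proj2 (Hbr k)). apply nth_middle.
Qed.

Lemma finite_subcover (Good : nat -> seqs -> Prop) (c : nat -> list bool) :
  (forall N w w', (forall i, (i < N)%nat -> w i = w' i) -> Good N w -> Good N w') ->
  (forall N w, Good (S N) w -> Good N w) ->
  (forall w, (forall N, Good N w) -> exists i, cyl (c i) w) ->
  exists N, forall s, length s = N -> Good N (seq_of s) ->
    exists i, (i < S N)%nat /\ (length (c i) <= N)%nat /\ is_prefix (c i) s.
Proof.
  intros Hdep Hmono Hcov. apply NNPP; intro HA.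
  assert (HB : forall N, exists s, length s = N /\ Good N (seq_of s) /\
     forall i, (i <= N)%nat -> (length (c i) <= N)%nat -> ~ is_prefix (c i) s).
  { intro N. apply NNPP; intro HN. apply HA. exists N. intros s Hs HG.
    apply NNPP; intro Hi. apply HN. exists s. split; auto. split; auto.
    intros i Hi1 Hi2 Hp. apply Hi. exists i. split; [lia|auto]. }
  set (sN := fun N => proj1_sig (constructive_indefinite_description _ (HB N))).
  assert (HsN : forall N, length (sN N) = N /\ Good N (seq_of (sN N)) /\
     forall i, (i <= N)%nat -> (length (c i) <= N)%nat -> ~ is_prefix (c i) (sN N)).
  { intro N. unfold sN. destruct (constructive_indefinite_description _ (HB N)); auto. }
  clearbody sN.
  (* The words that are prefixes of witnesses sN N for arbitrarily large N form an
     infinite tree; its branch w is good at every level but lies in no cylinder. *)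
  set (P := fun t => forall M, exists N, (M <= N)%nat /\ is_prefix t (sN N)).
  destruct (koenig_branch P) as [w Hw].
  { intro M. exists M. split; auto. exists (sN M); auto. }
  { intros t Ht. apply NNPP; intro Hn. apply not_or_and in Hn as [H0 H1].
    apply not_all_ex_not in H0 as [M0 H0]. apply not_all_ex_not in H1 as [M1 H1].
    destruct (Ht (max (max M0 M1) (S (length t)))) as [N [HN [e He]]].
    destruct (HsN N) as [HlN _].
    destruct e as [|b e].
    { rewrite app_nil_r in He. rewrite He in HlN. lia. }
    destruct b; [apply H1 | apply H0]; exists N; (split; [lia|]);
      exists e; rewrite He, <- app_assoc; auto. }
  assert (HwG : forall N, Good N w).
  { intro N. destruct (Hw N N) as [N' [HN' [e He]]].
    destruct (HsN N') as [_ [HG _]].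
    apply (family_antitone Good Hmono N N') in HG; auto.
    apply (Hdep N (seq_of (sN N'))); auto.
    intros i Hi. rewrite He, seq_of_app_lt by (rewrite pre_len; auto).
    rewrite seq_of_pre; auto. }
  destruct (Hcov w HwG) as [i Hi].
  apply cyl_pre in Hi.
  destruct (Hw (length (c i)) (max i (length (c i)))) as [N [HN Hpr]].
  destruct (HsN N) as [_ [_ Hno]]. apply (Hno i); try lia. rewrite Hi. auto.
Qed.

Lemma compact_meas f g (Good : nat -> seqs -> Prop) r :
  (forall N w w', (forall i, (i < N)%nat -> w i = w' i) -> Good N w -> Good N w') ->
  (forall N w, Good (S N) w -> Good N w) ->
  (forall N, r <= sum_words N (fun s => fmass f g s * ind (Good N (seq_of s)))) ->
  meas_ge f g (fun w => forall N, Good N w) r.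
Proof.
  intros Hdep Hmono Hmass c Hcov l Hl.
  assert (Hc0 : forall n, 0 <= cyl_meas f g (c n)) by (intro; apply fmass_ge0).
  destruct (finite_subcover Good c Hdep Hmono Hcov) as [N HN].
  apply Rle_trans with (sum_f_R0 (fun i => cyl_meas f g (c i)) N).
  2: apply partial_le_inf; auto.
  apply Rle_trans with (1 := Hmass N).
  rewrite <- sumN_sum_f.
  apply Rle_trans with (sum_words N (fun s => sumN (S N) (fun i => fmass f g s *
      ind ((length (c i) <= N)%nat /\ is_prefix (c i) s)))).
  - apply sum_words_le; intros s Hs. rewrite sumN_scal. apply Rmult_le_compat_l. apply fmass_ge0.
    apply ind_exists_le. intro HG. apply HN; auto.
  - rewrite sum_words_sumN. apply sumN_le. intros i _.
    destruct (Compare_dec.le_lt_dec (length (c i)) N) as [Hle|Hlt].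
    + rewrite cyl_meas_fm, <- (mass_prefix f g N (c i)) by auto. apply sum_words_le; intros.
      rewrite ind_and, ind_T by auto. lra.
    + rewrite (sum_words_ext _ _ (fun _ => 0)).
      * unfold sum_words; induction (words N); simpl; auto. lra.
      * intros s _. rewrite ind_F by lia. lra.
Qed.

Lemma meas_empty : measurable (fun _ => False).
Proof.
  apply (meas_ext (fun w => ~ cyl [] w)). apply meas_compl, meas_cyl.
  intro w; split; auto. intro H; apply H. intros i Hi; simpl in Hi; lia.
Qed.

(* An intersection of events each determined by finitely many outcomes is in
   G_infinity: its complement is a countable union of cylinders. *)
Lemma meas_closed (Good : nat -> seqs -> Prop) :
  (forall N w w', (forall i, (i < N)%nat -> w i = w' i) -> Good N w -> Good N w') ->
  measurable (fun w => forall N, Good N w).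
Proof.
  intro Hdep.
  set (Bad := fun N k w => (k < length (words N))%nat /\ ~ Good N (seq_of (nth k (words N) [])) /\
     cyl (nth k (words N) []) w).
  assert (HB : forall N k, measurable (Bad N k)).
  { intros N k. destruct (classic ((k < length (words N))%nat /\ ~ Good N (seq_of (nth k (words N) []))))
      as [Hy|Hn].
    - apply (meas_ext (cyl (nth k (words N) []))). apply meas_cyl. unfold Bad; tauto.
    - apply (meas_ext (fun _ => False)). apply meas_empty. unfold Bad; tauto. }
  apply (meas_ext (fun w => ~ exists N, exists k, Bad N k w)).
  - apply meas_compl. apply meas_union. intro N. apply meas_union. auto.
  - intro w; split.
    + intros H N. apply NNPP; intro HG. apply H. exists N.
      assert (Hin : In (pre w N) (words N)) by (apply words_in, pre_len).
      apply In_nth with (d := []) in Hin as [k [Hk Hnth]].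
      exists k. unfold Bad. rewrite Hnth. split; auto. split.
      * intro HG'. apply HG. apply (Hdep N (seq_of (pre w N))); auto. intros; apply seq_of_pre; auto.
      * intros i Hi. rewrite pre_len in Hi. change (w i = seq_of (pre w N) i). rewrite seq_of_pre; auto.
    + intros H [N [k [Hk [HG Hc]]]]. apply HG. apply (Hdep N w); auto.
      intros i Hi. rewrite Hc. auto.
      apply nth_In with (d := []) in Hk. apply words_len in Hk. lia.
Qed.

(* Since f <= 2 m, f-masses of events are at most twice their m-masses. *)
Lemma fmass_sum_le_mmass_sum f g N (I : list bool -> R) : (forall s, 0 <= I s) ->
  sum_words N (fun s => fmass f g s * I s) <= 2 * sum_words N (fun s => mmass f g s * I s).
Proof.
  intro HI. rewrite <- sum_words_scal. apply sum_words_le; intros.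
  pose proof (fmass_le_2mmass f g s). pose proof (fmass_ge0 f g s). specialize (HI s). nra.
Qed.

Lemma unclose_low_mass f g eps K L d rho : 0 < eps < 1 -> 0 < rho ->
  sum_words (L + d) (fun s => fmass f g s * ind ((K <= n_not_close f g eps (seq_of s) L)%nat /\
                                        rho^2 < 1 - Dword f g (pre (seq_of s) L)))
  <= theta eps ^ K / rho.
Proof.
  intros He Hr. rewrite sum_words_split.
  apply Rle_trans with (sum_words L (fun s0 => hellinger f g eps s0 * theta eps ^ K / rho)).
  - apply sum_words_le; intros s0 Hs. subst L.
    rewrite (sum_words_ext _ _ (fun e => ind ((K <= n_not_close f g eps (seq_of s0) (length s0))%nat /\
                                        rho^2 < 1 - Dword f g s0) * fmass f g (s0 ++ e))).
    + rewrite sum_words_scal, fmass_ext, Rmult_comm. apply unclose_low_pointwise; auto.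
    + intros e _. rewrite Rmult_comm. f_equal. apply ind_iff.
      rewrite pre_seq_of_app.
      rewrite (n_not_close_dep f g eps (seq_of (s0 ++ e)) (seq_of s0))
        by (intros; apply seq_of_app_lt; auto). tauto.
  - unfold Rdiv. rewrite (sum_words_ext _ _ (fun s => (theta eps ^ K * / rho) * hellinger f g eps s))
      by (intros; ring).
    rewrite sum_words_scal. pose proof (hellinger_total f g eps L He).
    assert (0 <= theta eps ^ K * / rho).
    { apply Rmult_le_pos. apply pow_le. pose proof (theta_range eps He); lra. left; apply Rinv_0_lt_compat; auto. }
    nra.
Qed.

(* f-mass of {1 - D_{L+1} <= r but 1 - D later reaches a} is at most 2 r / a,
   by the maximal inequality for the m-martingale 1 - D. *)
Lemma drop_mass f g L d r a : 0 < a -> 0 <= r ->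
  sum_words (L + d) (fun s => fmass f g s * ind (1 - Dword f g (pre (seq_of s) L) <= r /\
     exists j, (L <= j <= L + d)%nat /\ a <= 1 - Dword f g (pre (seq_of s) j)))
  <= 2 * r / a.
Proof.
  intros Ha Hr.
  eapply Rle_trans. apply fmass_sum_le_mmass_sum. intros; apply ind_01.
  rewrite sum_words_split.
  apply Rle_trans with (2 * sum_words L (fun s0 => r / a * mmass f g s0)).
  2: { rewrite sum_words_scal, mmass_total. lra. }
  apply Rmult_le_compat_l; [lra|]. apply sum_words_le; intros s0 Hs. subst L.
  rewrite (sum_words_ext _ _ (fun e => ind (1 - Dword f g s0 <= r) * (mmass f g (s0 ++ e) *
     ind (exists j, (length s0 <= j <= length s0 + d)%nat /\
          a <= (fun x => 1 - Dword f g x) (pre (seq_of (s0 ++ e)) j))))).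
  2: { intros e _. rewrite pre_seq_of_app, ind_and. ring. }
  rewrite sum_words_scal.
  pose proof (maximal_inequality (mmass f g) (fun x => 1 - Dword f g x)
    (fun x _ => mmass f g x * (1 - Dword f g x)) a
    (Rlt_le _ _ Ha) (mmass_ge0 f g) (mmass_add f g)) as Hh.
  assert (Hh' : a * sum_words d (fun e => mmass f g (s0 ++ e) *
     ind (exists j, (length s0 <= j <= length s0 + d)%nat /\
          a <= (fun x => 1 - Dword f g x) (pre (seq_of (s0 ++ e)) j))) <= mmass f g s0 * (1 - Dword f g s0)).
  { apply Hh.
    - intros. pose proof (Dword_range f g x). pose proof (mmass_ge0 f g x). nra.
    - intros. rewrite mmass_coD_add. lra.
    - intros x _ Hx. pose proof (mmass_ge0 f g x). nra. }
  destruct (classic (1 - Dword f g s0 <= r)) as [Hy|Hn].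
  - rewrite ind_T by auto. rewrite Rmult_1_l.
    apply (Rmult_le_reg_l a); auto. pose proof (mmass_ge0 f g s0).
    replace (a * (r / a * mmass f g s0)) with (mmass f g s0 * r) by (field; lra). nra.
  - rewrite ind_F by auto. pose proof (mmass_ge0 f g s0).
    assert (0 <= r / a) by (apply Rmult_le_pos; [lra| left; apply Rinv_0_lt_compat; lra]). nra.
Qed.

(* f-mass of {D moves by at least del after time T} is at most twice the
   energy increment over del^2, by the maximal inequality for the spread. *)
Lemma oscillation_mass f g T d del : 0 < del ->
  sum_words (T + d) (fun s => fmass f g s * ind (exists j, (T <= j <= T + d)%nat /\
     del^2 <= (Dword f g (pre (seq_of s) j) - Dword f g (pre (seq_of s) T))^2))
  <= 2 * (energy f g (T + d) - energy f g T) / del^2.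
Proof.
  intros Hd. assert (Hd2 : 0 < del^2) by (apply pow_lt; auto).
  eapply Rle_trans. apply fmass_sum_le_mmass_sum. intros; apply ind_01.
  rewrite energy_diff, sum_words_split.
  apply Rle_trans with (2 * sum_words T (fun s0 => / del^2 * spread f g (Dword f g s0) s0 d)).
  2: { rewrite sum_words_scal. right; field; lra. }
  apply Rmult_le_compat_l; [lra|]. apply sum_words_le; intros s0 Hs. subst T.
  rewrite (sum_words_ext _ _ (fun e => mmass f g (s0 ++ e) *
     ind (exists j, (length s0 <= j <= length s0 + d)%nat /\
          del^2 <= (fun x => (Dword f g x - Dword f g s0)^2) (pre (seq_of (s0 ++ e)) j)))).
  2: { intros e _. rewrite pre_seq_of_app. auto. }
  apply (Rmult_le_reg_l (del^2)); auto. rewrite <- Rmult_assoc, Rinv_r, Rmult_1_l by lra.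
  apply (maximal_inequality (mmass f g) (fun x => (Dword f g x - Dword f g s0)^2)
    (spread f g (Dword f g s0)) (del^2)).
  - lra.
  - apply mmass_ge0.
  - apply mmass_add.
  - intros; apply spread_ge0.
  - intros; rewrite spread_S; lra.
  - intros x d' Hx. pose proof (spread_ge f g (Dword f g s0) x d'). pose proof (mmass_ge0 f g x). nra.
Qed.

Lemma energy_settling f g (eta : nat -> R) : (forall k, 0 < eta k) ->
  exists T : nat -> nat, forall k t, (T k <= t)%nat -> energy f g t - energy f g (T k) <= eta k.
Proof.
  intro Heta.
  assert (HT : forall k, exists T, forall t, (T <= t)%nat -> energy f g t - energy f g T <= eta k).
  { intro k. apply (bounded_incr_tail _ 1); auto.
    - intros; apply energy_mono; auto.
    - apply energy_le1. }
  exists (fun k => proj1_sig (constructive_indefinite_description _ (HT k))).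
  intro k. destruct (constructive_indefinite_description _ (HT k)); auto.
Qed.

Lemma cv_of_settling (u : nat -> R) (T : nat -> nat) :
  (forall k j, (T k <= j)%nat -> Rabs (u j - u (T k)) < (/2)^k) -> exists l, Un_cv u l.
Proof.
  intro Hu.
  enough (Hc : Cauchy_crit u) by (destruct (R_complete u Hc) as [l Hl]; eauto).
  intros e He.
  destruct (pow_lt_1_zero (/2) ltac:(rewrite Rabs_pos_eq; lra) (e/2) ltac:(lra)) as [k Hk].
  specialize (Hk k (Nat.le_refl _)). rewrite Rabs_pos_eq in Hk by (apply pow_le; lra).
  exists (T k). intros t t' Ht Ht'. unfold R_dist.
  pose proof (Hu k t Ht) as H1. pose proof (Hu k t' Ht') as H2.
  rewrite <- Rabs_Ropp in H2.
  pose proof (Rabs_triang (u t - u (T k)) (- (u t' - u (T k)))).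
  replace (u t - u (T k) + - (u t' - u (T k))) with (u t - u t') in H by ring. lra.
Qed.

Lemma lim_ge (u : nat -> R) l c N0 : Un_cv u l -> (forall t, (N0 <= t)%nat -> c < u t) -> c <= l.
Proof.
  intros Hl Hc. apply Rnot_lt_le; intro H.
  destruct (Hl (c - l)) as [N HN]; [lra|].
  specialize (HN (max N N0) (Nat.le_max_l _ _)). specialize (Hc (max N N0) (Nat.le_max_r _ _)).
  unfold R_dist in HN. apply Rabs_def2 in HN. lra.
Qed.

Section GoodEvent.

Variables (f g : strategy) (eps : R) (K n : nat) (T : nat -> nat).
Hypothesis Heps : 0 < eps < 1.
Hypothesis HK : theta eps ^ K <= eps ^ 2 / 16.
Hypothesis Hn : (0 < n)%nat.
Hypothesis HT : forall k t, (T k <= t)%nat ->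
  energy f g t - energy f g (T k) <= eps / 8 * (/2) ^ S k * ((/2) ^ k) ^ 2.

(* D_n(w) is [Dword f g (pre w L)]. *)
Let L := Nat.pred n.

Definition settles (N : nat) (w : seqs) : Prop :=
  (forall j, (L <= j <= N)%nat -> 1 - eps / 2 < Dword f g (pre w j)) /\
  (forall k j, (k <= N)%nat -> (T k <= j <= N)%nat ->
     Rabs (Dword f g (pre w j) - Dword f g (pre w (T k))) < (/2) ^ k).

Definition good (N : nat) (w : seqs) : Prop :=
  (n <= N)%nat -> (n_not_close f g eps w n <= K)%nat \/ settles N w.

Lemma good_dep N w w' : (forall i, (i < N)%nat -> w i = w' i) -> good N w -> good N w'.
Proof.
  intros Hw HG HnN. destruct (HG HnN) as [H1|[H2 H3]].
  - left. rewrite <- (n_not_close_dep f g eps w w' n); auto. intros; apply Hw; lia.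
  - right. split.
    + intros j Hj. rewrite <- (pre_ext w w' j) by (intros; apply Hw; lia). auto.
    + intros k j Hk Hj. rewrite <- (pre_ext w w' j) by (intros; apply Hw; lia).
      rewrite <- (pre_ext w w' (T k)) by (intros; apply Hw; lia). auto.
Qed.

Lemma good_mono N w : good (S N) w -> good N w.
Proof.
  intros HG HnN. destruct (HG ltac:(lia)) as [H1|[H2 H3]]; [left; auto|right; split].
  - intros j Hj; apply H2; lia.
  - intros k j Hk Hj; apply H3; lia.
Qed.

Definition unclose_low (s : list bool) : Prop :=
  (K <= n_not_close f g eps (seq_of s) L)%nat /\ (eps / 4) ^ 2 < 1 - Dword f g (pre (seq_of s) L).

Definition drops (N : nat) (s : list bool) : Prop :=
  1 - Dword f g (pre (seq_of s) L) <= (eps / 4) ^ 2 /\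
  exists j, (L <= j <= N)%nat /\ eps / 2 <= 1 - Dword f g (pre (seq_of s) j).

Definition oscillates (N k : nat) (s : list bool) : Prop :=
  exists j, (T k <= j <= N)%nat /\
    ((/2) ^ k) ^ 2 <= (Dword f g (pre (seq_of s) j) - Dword f g (pre (seq_of s) (T k))) ^ 2.

Lemma bad_cover N s : (n <= N)%nat -> ~ good N (seq_of s) ->
  unclose_low s \/ drops N s \/ exists k, (k < S N)%nat /\ oscillates N k s.
Proof.
  intros HnN HnG.
  assert (Hnc : ~ (n_not_close f g eps (seq_of s) n <= K)%nat) by (intro; apply HnG; intros _; left; auto).
  assert (HG2 : ~ settles N (seq_of s)) by (intro; apply HnG; intros _; right; auto).
  assert (HK' : (K <= n_not_close f g eps (seq_of s) L)%nat).
  { replace n with (S L) in Hnc by (unfold L; lia). rewrite n_not_close_S in Hnc.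
    destruct eps_closeb; lia. }
  apply not_and_or in HG2 as [HA|HB].
  - apply not_all_ex_not in HA as [j Hj]. apply imply_to_and in Hj as [Hj Hj'].
    destruct (classic (1 - Dword f g (pre (seq_of s) L) <= (eps / 4) ^ 2)) as [Hy|Hy].
    + right; left. split; auto. exists j. split; auto. lra.
    + left. split; auto. lra.
  - right; right. apply not_all_ex_not in HB as [k HB]. apply not_all_ex_not in HB as [j HB].
    apply imply_to_and in HB as [Hk HB]. apply imply_to_and in HB as [Hj HB].
    exists k. split; [lia|]. exists j. split; auto.
    rewrite <- (pow2_abs (_ - _)). apply pow_incr. split; [left; apply pow_lt; lra| lra].
Qed.

Lemma unclose_low_total d : sum_words (L + d) (fun s => fmass f g s * ind (unclose_low s)) <= eps / 4.
Proof.
  eapply Rle_trans. { apply unclose_low_mass; lra. }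
  apply (Rmult_le_reg_r (eps / 4)); [lra|].
  unfold Rdiv at 1. rewrite Rmult_assoc, Rinv_l by lra. nra.
Qed.

Lemma drops_total d : sum_words (L + d) (fun s => fmass f g s * ind (drops (L + d) s)) <= eps / 4.
Proof.
  eapply Rle_trans. { apply drop_mass; nra. }
  right. field. lra.
Qed.

Lemma oscillates_total N :
  sumN (S N) (fun k => sum_words N (fun s => fmass f g s * ind (oscillates N k s))) <= eps / 4.
Proof.
  apply Rle_trans with (sumN (S N) (fun k => (eps / 4) * (/2) ^ S k)).
  2: { rewrite sumN_scal. pose proof (sumN_geom (S N)). nra. }
  apply sumN_le; intros k _.
  assert (Hd : 0 < ((/2) ^ k) ^ 2) by (apply pow_lt, pow_lt; lra).
  assert (0 <= (/2) ^ S k) by (apply pow_le; lra).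
  destruct (Compare_dec.le_lt_dec (T k) N) as [HTN|HTN].
  - destruct (Nat.le_exists_sub (T k) N HTN) as [d [Ed _]].
    rewrite (Nat.add_comm d) in Ed. unfold oscillates. rewrite Ed.
    eapply Rle_trans. { apply oscillation_mass, pow_lt; lra. }
    rewrite <- Ed. specialize (HT k N HTN).
    apply (Rmult_le_reg_r (((/2) ^ k) ^ 2)); auto.
    unfold Rdiv. rewrite Rmult_assoc, Rinv_l, Rmult_1_r by lra. nra.
  - rewrite (sum_words_ext _ _ (fun s => 0 * fmass f g s)).
    + rewrite sum_words_scal. nra.
    + intros s _. unfold oscillates. rewrite ind_F. ring. intros [j [Hj _]]. lia.
Qed.

Lemma bad_mass N : sum_words N (fun s => fmass f g s * ind (~ good N (seq_of s))) <= eps.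
Proof.
  destruct (Compare_dec.le_lt_dec n N) as [HnN|HnN].
  2: { apply Rle_trans with (sum_words N (fun s => 0 * fmass f g s)).
       - apply sum_words_le; intros. rewrite ind_F. lra. intro HG; apply HG. intro; lia.
       - rewrite sum_words_scal; lra. }
  destruct (Nat.le_exists_sub L N ltac:(unfold L; lia)) as [d [Ed _]].
  rewrite Nat.add_comm in Ed. subst N.
  apply Rle_trans with (sum_words (L + d) (fun s =>
      fmass f g s * ind (unclose_low s) + fmass f g s * ind (drops (L + d) s) +
      sumN (S (L + d)) (fun k => fmass f g s * ind (oscillates (L + d) k s)))).
  - apply sum_words_le; intros s _. rewrite sumN_scal, <- !Rmult_plus_distr_l.
    apply Rmult_le_compat_l; [apply fmass_ge0|].
    apply Rle_trans with (ind (unclose_low s \/ drops (L + d) s) +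
                          ind (exists k, (k < S (L + d))%nat /\ oscillates (L + d) k s)).
    + apply ind_le_or. intro HnG. apply bad_cover in HnG; tauto.
    + pose proof (ind_le_or _ (unclose_low s) (drops (L + d) s) (fun h => h)).
      pose proof (ind_exists_le (S (L + d)) (fun k => oscillates (L + d) k s) _ (fun h => h)).
      lra.
  - rewrite !sum_words_plus, sum_words_sumN.
    pose proof (unclose_low_total d). pose proof (drops_total d). pose proof (oscillates_total (L + d)).
    lra.
Qed.

Lemma good_mass N : 1 - eps <= sum_words N (fun s => fmass f g s * ind (good N (seq_of s))).
Proof.
  rewrite (sum_words_ext _ _ (fun s => fmass f g s - fmass f g s * ind (~ good N (seq_of s))))
    by (intros; rewrite ind_not; ring).
  rewrite sum_words_minus, fmass_total. pose proof (bad_mass N). lra.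
Qed.

Lemma settles_conclusion w : (forall N, (n <= N)%nat -> settles N w) ->
  in_L_D f g (1 - eps) w /\
  forall t, (n <= t)%nat -> Rabs (Dtest f g w t - Dtest f g w n) < eps.
Proof.
  intro HS.
  assert (High : forall j, (L <= j)%nat -> 1 - eps / 2 < Dword f g (pre w j)).
  { intros j Hj. apply (proj1 (HS (max j n) (Nat.le_max_r _ _))). lia. }
  assert (Osc : forall k j, (T k <= j)%nat ->
      Rabs (Dword f g (pre w j) - Dword f g (pre w (T k))) < (/2) ^ k).
  { intros k j Hj. apply (proj2 (HS (max (max j k) n) (Nat.le_max_r _ _))); lia. }
  assert (Le1 : forall j, Dword f g (pre w j) <= 1) by (intro; apply Dword_range).
  split.
  - destruct (cv_of_settling (Dtest f g w) (fun k => S (T k))) as [l Hl].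
    { intros k j Hj. rewrite !Dtest_pre. apply Osc. simpl; lia. }
    exists l. split; auto.
    assert (1 - eps / 2 <= l).
    { apply (lim_ge _ _ _ n Hl). intros t Htn. rewrite Dtest_pre. apply High. unfold L; lia. }
    lra.
  - intros t Htn. rewrite !Dtest_pre.
    pose proof (High (Nat.pred t) ltac:(unfold L; lia)). pose proof (High L (le_n _)).
    pose proof (Le1 (Nat.pred t)). pose proof (Le1 L).
    unfold L in *. apply Rabs_def1; lra.
Qed.

End GoodEvent.

Lemma theta_pow_small eps : 0 < eps < 1 ->
  exists K, (0 < K)%nat /\ theta eps ^ K <= eps ^ 2 / 16.
Proof.
  intro He. pose proof (theta_range eps He) as Ht.
  destruct (pow_lt_1_zero (theta eps) ltac:(rewrite Rabs_pos_eq; lra) (eps ^ 2 / 16)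
    ltac:(nra)) as [K HK].
  exists (S K). split; [lia|].
  apply Rlt_le, Rle_lt_trans with (2 := HK (S K) ltac:(lia)), Rle_abs.
Qed.

Theorem mainTheorem9 :
  forall eps : R, 0 < eps < 1 ->
  exists K : nat, (0 < K)%nat /\
    forall (f g : strategy) (n : nat), (0 < n)%nat ->
      exists S : seqs -> Prop,
        measurable S /\ meas_ge f g S (1 - eps) /\
        forall w, S w ->
          (n_not_close f g eps w n <= K)%nat \/
          (in_L_D f g (1 - eps) w /\
           forall t, (n <= t)%nat ->
             Rabs (Dtest f g w t - Dtest f g w n) < eps).
Proof.
  intros eps He.
  destruct (theta_pow_small eps He) as [K [HK0 HK]].
  exists K. split; auto. intros f g n Hn.
  destruct (energy_settling f g (fun k => eps / 8 * (/2) ^ S k * ((/2) ^ k) ^ 2)) as [T HT].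
  { intro k. apply Rmult_lt_0_compat; [apply Rmult_lt_0_compat|]; repeat apply pow_lt; lra. }
  exists (fun w => forall N, good f g eps K n T N w).
  split; [|split].
  - apply meas_closed. intro N. apply good_dep; auto.
  - apply compact_meas; [apply good_dep; auto | apply good_mono; auto | intro N; apply good_mass; auto].
  - intros w Hw.
    destruct (Compare_dec.le_dec (n_not_close f g eps w n) K) as [Hle|Hgt]; [left; auto|right].
    apply (settles_conclusion f g eps n T); auto.
    intros N HN. destruct (Hw N HN) as [H|H]; [contradiction|auto].
Qed.
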